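(* For every bisection $\mathcal{S}=(S,\overline{S})$ and every vertex $u$, a $u$-pair for $\mathcal{S}$ exists if and only if $u$ is non-stubborn.
   Context: $G$ is a finite simple undirected graph with an odd number $n$ of vertices; $N(u)$ is the set of neighbors of $u$, $d(u)=|N(u)|$, and $\overline{N}(u)$ the set of vertices other than $u$ not adjacent to $u$. Each vertex $x$ has stubbornness $\alpha_x\in(0,1)$ and $a_x=\lfloor\alpha_x/(1-\alpha_x)\rfloor$. A vertex $x$ is stubborn if $a_x\ge\min\{d(x),n-d(x)-1\}$, non-stubborn otherwise. $W(A,B)$ is the number of edges with one endpoint in $A$ and the other in $B$. A bisection $(S,\overline{S})$ partitions the vertices with $|S|=\frac{n+1}{2}$, $|\overline{S}|=\frac{n-1}{2}$. Deficiency: $\mathrm{def}_{\mathcal{S}}(x)=W(x,S)-W(x,\overline{S})$ for $x\in S$, $W(x,\overline{S})-W(x,S)$ for $x\in\overline{S}$. Rank: $\mathrm{rank}_{\mathcal{S}}(u)=\lceil (a_u+1-\mathrm{def}_{\mathcal{S}}(u))/2\rceil$. A $u$-pair for $\mathcal{S}$ is a pair of sets $(A_u,B_u)$ with: if $u\in S$, $A_u\subseteq S\cap\overline{N}(u)$, $B_u\subseteq\overline{S}\cap N(u)$, $|A_u|=|B_u|=\mathrm{rank}_{\mathcal{S}}(u)$; if $u\in\overline{S}$, $A_u\subseteq S\cap N(u)$, $B_u\subseteq\overline{S}\cap\overline{N}(u)$, $|A_u|=\mathrm{rank}_{\mathcal{S}}(u)$, $|B_u|=\mathrm{rank}_{\mathcal{S}}(u)-1$.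 *)

From mathcomp Require Import all_boot all_order all_algebra.
From mathcomp Require Import reals.
Set Implicit Arguments. Unset Strict Implicit. Unset Printing Implicit Defensive.
Import Order.TTheory GRing.Theory Num.Theory.
Local Open Scope ring_scope.

(* A finite simple graph on the vertex type T is given by a symmetric,
   irreflexive relation e : rel T; n = #|T|. *)
Section Defs.
Variables (R : realType) (T : finType) (e : rel T) (alpha : T -> R).

Definition nbhd (u : T) : {set T} := [set v | e u v].
Definition nonnbhd (u : T) : {set T} := [set v | (v != u) && ~~ e u v].
Definition deg (u : T) : nat := #|nbhd u|.
Definition Wv (x : T) (A : {set T}) : nat := #|[set y in A | e x y]|.

Definition aval (x : T) : int := Num.floor (alpha x / (1 - alpha x)).

Definition stubborn (x : T) : bool :=
  Num.min ((deg x)%:Z) (#|T|%:Z - (deg x)%:Z - 1) <= aval x.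

Definition bisection (S : {set T}) : bool := #|S| == (#|T|.+1)./2.

Definition deficiency (S : {set T}) (x : T) : int :=
  if x \in S then (Wv x S)%:Z - (Wv x (~: S))%:Z
  else (Wv x (~: S))%:Z - (Wv x S)%:Z.

Definition rank (S : {set T}) (u : T) : int :=
  Num.ceil (((aval u + 1 - deficiency S u)%:~R : R) / 2).

(* u-pair (A, B) for (S, ~: S).  Set sizes prescribed to be a possibly
   negative integer r are read as max(r, 0). *)
Definition upair (S : {set T}) (u : T) (A B : {set T}) : Prop :=
  if u \in S then
    [/\ A \subset S :&: nonnbhd u, B \subset (~: S) :&: nbhd u,
        #|A|%:Z = Num.max 0 (rank S u) & #|B|%:Z = Num.max 0 (rank S u)]
  else
    [/\ A \subset S :&: nbhd u, B \subset (~: S) :&: nonnbhd u,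
        #|A|%:Z = Num.max 0 (rank S u) & #|B|%:Z = Num.max 0 (rank S u - 1)].
End Defs.

From mathcomp Require Import all_boot all_order all_algebra.
From mathcomp Require Import reals zify.
Set Implicit Arguments. Unset Strict Implicit. Unset Printing Implicit Defensive.
Import Order.TTheory GRing.Theory Num.Theory.
Local Open Scope ring_scope.

(* A u-pair exists exactly when each of the two sets it is drawn from has at
   least rank(u) (resp. rank(u) - 1) elements.  Writing both sizes in terms of
   d(u), |S| = (n+1)/2 and def(u), each of these two inequalities turns into one
   half of non-stubbornness: one is a_u < d(u), the other a_u < n - d(u) - 1. *)

Lemma exists_subset_card (T : finType) (X : {set T}) (k : nat) :
  (k <= #|X|)%N -> exists A : {set T}, A \subset X /\ #|A| = k.
Proof.
elim: k => [|k IHk] le_kX; first by exists set0; rewrite sub0set cards0.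
have [A [sAX cardA]] := IHk (ltnW le_kX).
have : (0 < #|X :\: A|)%N by rewrite cardsD (setIidPr sAX) cardA subn_gt0.
case/card_gt0P => x; rewrite inE => /andP [xNA xX].
exists (x |: A); split; first by rewrite subUset sub1set xX.
by rewrite cardsU1 xNA cardA.
Qed.

Lemma exists_subset_cardz (T : finType) (X : {set T}) (k : int) :
  (exists A : {set T}, A \subset X /\ #|A|%:Z = Num.max 0 k) <-> k <= #|X|%:Z.
Proof.
split=> [[A [sAX cardA]]|le_kX].
  have le_k_max : k <= Num.max 0 k by rewrite le_max lexx orbT.
  by apply: (le_trans le_k_max); rewrite -cardA lez_nat subset_leq_card.
have k0 : 0 <= Num.max 0 k by rewrite le_max lexx.
have [|A [sAX cardA]] := @exists_subset_card T X (absz (Num.max 0 k)).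
  by rewrite -lez_nat gez0_abs // ge_max le_kX andbT.
by exists A; split; rewrite // cardA gez0_abs.
Qed.

Section Counting.
Variables (T : finType) (e : rel T).

Lemma Wv_setI (x : T) (X : {set T}) : Wv e x X = #|X :&: nbhd e x|.
Proof. by apply: eq_card => v; rewrite !inE. Qed.

Lemma deg_Wv_setC (u : T) (S : {set T}) :
  deg e u = (Wv e u S + Wv e u (~: S))%N.
Proof.
by rewrite /deg -(cardsID S (nbhd e u)) !Wv_setI setIC setDE [_ :&: ~: S]setIC.
Qed.

Hypothesis e_irr : irreflexive e.

Lemma card_nbhd_nonnbhd (u : T) (X : {set T}) :
  (#|X :&: nbhd e u| + #|X :&: nonnbhd e u| + (u \in X) = #|X|)%N.
Proof.
rewrite -(cardsID (nbhd e u) X) -addnA; congr (_ + _)%N.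
rewrite (cardsD1 u (X :\: _)) addnC.
have -> : X :\: nbhd e u :\ u = X :&: nonnbhd e u.
  by apply/setP => v; rewrite !inE; case: (v \in X); rewrite ?andbF ?andbT.
by rewrite !inE e_irr.
Qed.

End Counting.

Section Pairs.
Variables (R : realType) (T : finType) (e : rel T) (alpha : T -> R).

Lemma rank_le (S : {set T}) (u : T) (m : int) :
  (rank e alpha S u <= m) = (aval alpha u + 1 - deficiency e S u <= 2 * m).
Proof.
by rewrite /rank ceil_le_int ler_pdivrMr // -[2 : R]/(2%:~R) -intrM ler_int mulrC.
Qed.

Lemma exists_upairP (S : {set T}) (u : T) :
  (exists A B : {set T}, upair e alpha S u A B) <->
  if u \in S then
    rank e alpha S u <= #|S :&: nonnbhd e u|%:Z /\
    rank e alpha S u <= #|~: S :&: nbhd e u|%:Z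
  else
    rank e alpha S u <= #|S :&: nbhd e u|%:Z /\
    rank e alpha S u - 1 <= #|~: S :&: nonnbhd e u|%:Z.
Proof.
rewrite /upair; case: (u \in S); split.
1,3: by case=> A [B [sA sB cA cB]]; split; apply/exists_subset_cardz; [exists A|exists B].
all: case=> /exists_subset_cardz [A [sA cA]] /exists_subset_cardz [B [sB cB]].
all: by exists A, B.
Qed.

End Pairs.

Theorem lemma4 (R : realType) (T : finType) (e : rel T)
  (e_sym : symmetric e) (e_irr : irreflexive e) (n_odd : odd #|T|)
  (alpha : T -> R) (alpha_range : forall x, 0 < alpha x < 1)
  (S : {set T}) (hS : bisection S) (u : T) :
  (exists A B : {set T}, upair e alpha S u A B) <-> ~~ stubborn e alpha u.
Proof.
have cardS : (#|S|.*2 = #|T|.+1)%N.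
  by rewrite (eqP hS) -{2}(odd_double_half #|T|.+1) /= n_odd.
have cardSC := cardsC S.
have cardSu := card_nbhd_nonnbhd e_irr u S.
have cardSCu := card_nbhd_nonnbhd e_irr u (~: S).
have degu := deg_Wv_setC e u S.
rewrite !Wv_setI in degu.
rewrite exists_upairP /stubborn ge_min negb_or -!ltNge lerBlDr !rank_le /deficiency !Wv_setI.
(* The two occurrences of #|T| differ syntactically; lia needs them merged. *)
set n := #|T| in cardS cardSC *.
rewrite inE in cardSCu; case: (u \in S) cardSu cardSCu => /= cardSu cardSCu.
all: by split=> [[]|/andP[]]; lia.
Qed.
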